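(* Let $\sigma:\mathbb{R}\to\mathbb{R}$ be Lipschitz continuous with exactly $n$ zeros $x_1<\cdots<x_n$, and set $x_0=-\infty$, $x_{n+1}=+\infty$. For $i=0,1,\dots,n$ let $H_i(x)=\int_{a_i}^x\frac{\mathrm{d}y}{\sigma(y)}$ for $x\in(x_i,x_{i+1})$, where $a_i\in(x_i,x_{i+1})$ is a constant. Then for each $i=0,1,\dots,n$: (i) $H_i$ is well defined and monotone on $(x_i,x_{i+1})$; (ii) $H_i$ is a bijection from $(x_i,x_{i+1})$ onto $(-\infty,\infty)$; (iii) $H_i$ has an inverse $H_i^{-1}$, which is a bijection from $(-\infty,\infty)$ onto $(x_i,x_{i+1})$; (iv) for every $y\in\mathbb{R}$, the map $x\mapsto H_i^{-1}(H_i(x)+y)$ is a bijection from $(x_i,x_{i+1})$ onto $(x_i,x_{i+1})$, and $$\lim_{x\to x_i^+}H_i^{-1}(H_i(x)+y)=x_i,\qquad \lim_{x\to x_{i+1}^-}H_i^{-1}(H_i(x)+y)=x_{i+1}.$$ *)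

From Stdlib Require Import Reals.
From Coquelicot Require Export Coquelicot.
Open Scope R_scope.

Definition lipschitz (sigma : R -> R) : Prop :=
  exists L : R, forall x y, Rabs (sigma x - sigma y) <= L * Rabs (x - y).

(* The zeros x_1 < ... < x_n of sigma are z 1, ..., z n (z k for k outside
   1..n is irrelevant).  x_0 = -oo and x_{n+1} = +oo. *)
Definition xlo (z : nat -> R) (i : nat) : Rbar :=
  match i with O => m_infty | _ => Finite (z i) end.
Definition xhi (n : nat) (z : nat -> R) (i : nat) : Rbar :=
  if Nat.eqb i n then p_infty else Finite (z (S i)).

Definition in_ival (n : nat) (z : nat -> R) (i : nat) (x : R) : Prop :=
  Rbar_lt (xlo z i) x /\ Rbar_lt x (xhi n z i).

Definition Hfun (sigma : R -> R) (a : nat -> R) (i : nat) (x : R) : R :=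
  RInt (fun y => / sigma y) (a i) x.

Definition from_right (b : Rbar) : (R -> Prop) -> Prop :=
  match b with Finite r => at_right r | _ => Rbar_locally b end.
Definition from_left (b : Rbar) : (R -> Prop) -> Prop :=
  match b with Finite r => at_left r | _ => Rbar_locally b end.

Definition bij_on (A B : R -> Prop) (f : R -> R) : Prop :=
  (forall x, A x -> B (f x)) /\
  (forall x1 x2, A x1 -> A x2 -> f x1 = f x2 -> x1 = x2) /\
  (forall y, B y -> exists x, A x /\ f x = y).

From Stdlib Require Import Reals Lra Lia ClassicalEpsilon.
From Coquelicot Require Import Coquelicot.
Open Scope R_scope.

(* On an interval between consecutive zeros sigma has a constant sign, so H_i is
   strictly monotone with derivative 1 / sigma.  Lipschitz continuity gives
   |sigma x| <= L |x - x_k| near a zero and |sigma x| <= |sigma a| + L |x - a| at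
   infinity; comparing with the logarithmic primitives of these bounds shows that
   H_i is unbounded at both ends, so H_i is a bijection onto R.  The map
   x |-> H_i^-1 (H_i x + y) is then a monotone bijection of the interval that
   tends to its ends.  Replacing sigma by - sigma reduces to sigma > 0, and the
   reflection x |-> - x reduces every statement about the left end to the right
   end. *)

Definition between (lo hi : Rbar) (x : R) : Prop := Rbar_lt lo x /\ Rbar_lt x hi.

Definition lipschitz_with (L : R) (sigma : R -> R) : Prop :=
  forall x y, Rabs (sigma x - sigma y) <= L * Rabs (x - y).

Definition increasing_on (lo hi : Rbar) (G : R -> R) : Prop :=
  forall x1 x2, between lo hi x1 -> between lo hi x2 -> x1 < x2 -> G x1 < G x2.

Lemma increasing_on_le lo hi (G : R -> R) :
  increasing_on lo hi G ->
  forall x1 x2, between lo hi x1 -> between lo hi x2 -> x1 <= x2 -> G x1 <= G x2.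
Proof.
  intros Hinc x1 x2 I1 I2 Hle. destruct (Rle_lt_or_eq_dec _ _ Hle) as [Hlt | ->].
  - apply Rlt_le, Hinc; auto.
  - apply Rle_refl.
Qed.

Lemma between_convex lo hi x1 x2 w :
  between lo hi x1 -> between lo hi x2 -> x1 <= w <= x2 -> between lo hi w.
Proof.
  intros [A1 _] [_ B2] Hw. split.
  - eapply Rbar_lt_le_trans; [exact A1|]. simpl; lra.
  - eapply Rbar_le_lt_trans; [|exact B2]. simpl; lra.
Qed.

Lemma between_above lo hi a x :
  between lo hi a -> a <= x -> Rbar_lt x hi -> between lo hi x.
Proof.
  intros [Ha _] Hax Hx. split; [|exact Hx].
  eapply Rbar_lt_le_trans; [exact Ha|]. exact Hax.
Qed.

Lemma between_opp lo hi x :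
  between lo hi (- x) <-> between (Rbar_opp hi) (Rbar_opp lo) x.
Proof. unfold between; destruct lo, hi; simpl; intuition lra. Qed.

Lemma open_between lo hi : open (between lo hi).
Proof. apply open_and; [apply open_Rbar_gt | apply open_Rbar_lt]. Qed.

#[local] Instance from_left_proper (b : Rbar) : ProperFilter (from_left b).
Proof. destruct b; simpl; typeclasses eauto. Qed.

#[local] Instance from_right_proper (b : Rbar) : ProperFilter (from_right b).
Proof. destruct b; simpl; typeclasses eauto. Qed.

Lemma filterlim_Ropp_from_right (b : Rbar) :
  filterlim Ropp (from_right b) (from_left (Rbar_opp b)).
Proof.
  destruct b; simpl;
    [apply filterlim_Ropp_right | apply (filterlim_Rbar_opp p_infty)
    | apply (filterlim_Rbar_opp m_infty)].
Qed.

Lemma filterlim_reflect (f : R -> R) (lo l : Rbar) :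
  filterlim f (from_left (Rbar_opp lo)) (Rbar_locally l) ->
  filterlim (fun x => - f (- x)) (from_right lo) (Rbar_locally (Rbar_opp l)).
Proof.
  intros Hf. eapply filterlim_comp; [|apply filterlim_Rbar_opp].
  eapply filterlim_comp; [apply filterlim_Ropp_from_right | exact Hf].
Qed.

Lemma from_left_beyond lo hi x0 :
  between lo hi x0 -> from_left hi (fun x => x0 < x /\ between lo hi x).
Proof.
  intros I0. pose proof (proj2 I0) as Hhi.
  destruct hi as [b| |]; simpl in Hhi |- *; [|exists x0 | contradiction].
  - assert (He : 0 < b - x0) by lra. exists (mkposreal _ He).
    intros x Hx Hxb. change (Rabs (x - b) < b - x0) in Hx.
    rewrite Rabs_left in Hx by lra. split; [lra|].
    apply (between_above _ _ x0); [exact I0 | lra | exact Hxb].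
  - intros x Hx. split; [exact Hx|].
    apply (between_above _ _ x0); [exact I0 | lra | exact I].
Qed.

Lemma Rbar_locally_threshold lo hi a P :
  between lo hi a -> Rbar_locally hi P ->
  exists p, between lo hi p /\ forall u, between lo hi u -> p < u -> P u.
Proof.
  intros Ia HP. pose proof (proj2 Ia) as Hhi.
  destruct hi as [b| |]; simpl in Hhi, HP; [|destruct HP as [M HM] | contradiction].
  - destruct HP as [e He]. pose proof (cond_pos e).
    exists (Rmax a (b - e / 2)).
    assert (Hp : a <= Rmax a (b - e / 2) < b).
    { split; [apply Rmax_l | apply Rmax_lub_lt; lra]. }
    split; [apply (between_above _ _ a); [exact Ia | lra | exact (proj2 Hp)]|].
    intros u [_ Hu] Hpu. simpl in Hu. apply He.
    change (Rabs (u - b) < e). rewrite Rabs_left by lra.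
    pose proof (Rmax_r a (b - e / 2)). lra.
  - exists (Rmax a M).
    split; [apply (between_above _ _ a); [exact Ia | apply Rmax_l | exact I]|].
    intros u _ Hu. apply HM. pose proof (Rmax_r a M). lra.
Qed.

Lemma filterlim_div_p_infty {T} {F : (T -> Prop) -> Prop} {FF : Filter F}
  (f : T -> R) (k : R) :
  0 < k -> filterlim f F (Rbar_locally p_infty) ->
  filterlim (fun x => f x / k) F (Rbar_locally p_infty).
Proof.
  intros Hk Hf. apply (filterlim_comp _ _ _ f (fun t => t / k) _ _ _ Hf).
  intros P [M HM]. exists (M * k). intros t Ht. apply HM.
  apply (Rmult_lt_reg_r k); [exact Hk|]. field_simplify; lra.
Qed.

Section ShiftLimit.

Variables (lo hi : Rbar) (G Ginv : R -> R).
Hypothesis G_incr : increasing_on lo hi G.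
Hypothesis Ginv_between : forall r, between lo hi (Ginv r).
Hypothesis G_Ginv : forall r, G (Ginv r) = r.
Hypothesis G_unbounded_above : forall r, exists x, between lo hi x /\ r < G x.

Lemma lt_Ginv p r : between lo hi p -> G p < r -> p < Ginv r.
Proof.
  intros Ip Hr. apply Rnot_le_lt. intros Hle.
  pose proof (increasing_on_le _ _ _ G_incr _ _ (Ginv_between r) Ip Hle) as HG.
  rewrite G_Ginv in HG. lra.
Qed.

Lemma filterlim_shift_from_left (y : R) :
  filterlim (fun x => Ginv (G x + y)) (from_left hi) (Rbar_locally hi).
Proof.
  intros P HP. unfold filtermap.
  destruct (Rbar_locally_threshold lo hi (Ginv 0) P (Ginv_between 0) HP)
    as [p [Ip Hp]].
  destruct (G_unbounded_above (G p - y)) as [x0 [I0 H0]].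
  apply (filter_imp (fun x => x0 < x /\ between lo hi x));
    [|exact (from_left_beyond lo hi x0 I0)].
  intros x [Hx Ix]. apply Hp; [apply Ginv_between|]. apply lt_Ginv; [exact Ip|].
  pose proof (G_incr _ _ I0 Ix Hx). lra.
Qed.

End ShiftLimit.

Lemma bij_on_ext (A B : R -> Prop) (f g : R -> R) :
  (forall x, f x = g x) -> bij_on A B f -> bij_on A B g.
Proof.
  intros E [Hmaps [Hinj Hsurj]]. split; [|split].
  - intros x Hx. rewrite <- E. auto.
  - intros x1 x2 H1 H2 H. apply Hinj; auto. rewrite !E. exact H.
  - intros y Hy. destruct (Hsurj y Hy) as [x [Hx Hfx]]. exists x. rewrite <- E. auto.
Qed.

(* [H] straightens the flow of x' = sigma x when H' = 1 / sigma: the maps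
   x |-> Hinv (H x + y) are its time-y maps. *)
Definition flow_chart (lo hi : Rbar) (H : R -> R) : Prop :=
  bij_on (between lo hi) (fun _ => True) H /\
  exists Hinv : R -> R,
    (forall x, between lo hi x -> Hinv (H x) = x) /\
    (forall r, H (Hinv r) = r) /\
    bij_on (fun _ => True) (between lo hi) Hinv /\
    forall y : R,
      bij_on (between lo hi) (between lo hi) (fun x => Hinv (H x + y)) /\
      filterlim (fun x => Hinv (H x + y)) (from_right lo) (Rbar_locally lo) /\
      filterlim (fun x => Hinv (H x + y)) (from_left hi) (Rbar_locally hi).

Section IncreasingChart.

Variables (lo hi : Rbar) (G : R -> R).
Hypothesis G_cont : forall x, between lo hi x -> continuity_pt G x.
Hypothesis G_incr : increasing_on lo hi G.
Hypothesis G_unbounded_above : forall r, exists x, between lo hi x /\ r < G x.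
Hypothesis G_unbounded_below : forall r, exists x, between lo hi x /\ G x < r.

Lemma increasing_on_inj x1 x2 :
  between lo hi x1 -> between lo hi x2 -> G x1 = G x2 -> x1 = x2.
Proof.
  intros I1 I2 E. destruct (Rtotal_order x1 x2) as [Hlt|[Heq|Hgt]]; [|exact Heq|].
  - pose proof (G_incr _ _ I1 I2 Hlt). lra.
  - pose proof (G_incr _ _ I2 I1 Hgt). lra.
Qed.

Lemma increasing_on_surj r : exists x, between lo hi x /\ G x = r.
Proof.
  destruct (G_unbounded_below r) as [x1 [I1 H1]].
  destruct (G_unbounded_above r) as [x2 [I2 H2]].
  assert (H12 : x1 < x2).
  { apply Rnot_le_lt. intros Hle.
    pose proof (increasing_on_le _ _ _ G_incr _ _ I2 I1 Hle). lra. }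
  destruct (Ranalysis5.IVT_interv (fun x => G x - r) x1 x2) as [w [Hw Hw0]];
    [| exact H12 | lra | lra |].
  - intros c Hc. apply continuity_pt_minus; [|apply continuity_pt_const; now intros ? ?].
    apply G_cont, (between_convex _ _ x1 x2); auto.
  - exists w. split; [apply (between_convex _ _ x1 x2); auto | lra].
Qed.

Lemma flow_chart_increasing : flow_chart lo hi G.
Proof.
  destruct (choice _ increasing_on_surj) as [Ginv HGinv].
  assert (Ginv_between : forall r, between lo hi (Ginv r)) by apply HGinv.
  assert (G_Ginv : forall r, G (Ginv r) = r) by apply HGinv.
  assert (Ginv_G : forall x, between lo hi x -> Ginv (G x) = x).
  { intros x Ix. apply increasing_on_inj; auto. }
  split.
  { split; [now intros | split; [exact increasing_on_inj|]].
    intros r _. apply increasing_on_surj. }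
  exists Ginv. split; [exact Ginv_G|]. split; [exact G_Ginv|]. split.
  { split; [intros r _; apply Ginv_between | split].
    - intros r1 r2 _ _ E. rewrite <- (G_Ginv r1), <- (G_Ginv r2), E. reflexivity.
    - intros x Ix. exists (G x). auto. }
  intros y. split; [|split].
  - split; [intros x _; apply Ginv_between | split].
    + intros x1 x2 I1 I2 E. apply increasing_on_inj; auto.
      apply (f_equal G) in E. rewrite !G_Ginv in E. lra.
    + intros w Iw. exists (Ginv (G w - y)). split; [apply Ginv_between|].
      rewrite G_Ginv. replace (G w - y + y) with (G w) by ring. auto.
  - (* the left end is the right end of the reflected chart [x |-> - G (- x)] *)
    assert (Hrefl : filterlim (fun x => - Ginv (- (- G (- x) + - y)))
      (from_left (Rbar_opp lo)) (Rbar_locally (Rbar_opp lo))).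
    { refine (filterlim_shift_from_left (Rbar_opp hi) (Rbar_opp lo)
        (fun x => - G (- x)) (fun r => - Ginv (- r)) _ _ _ _ (- y)).
      - intros x1 x2 I1 I2 Hlt. apply between_opp in I1, I2.
        pose proof (G_incr _ _ I2 I1 ltac:(lra)). lra.
      - intros r. apply between_opp. rewrite !Rbar_opp_involutive. apply Ginv_between.
      - intros r. rewrite Ropp_involutive, G_Ginv. ring.
      - intros r. destruct (G_unbounded_below (- r)) as [x [Ix Hx]].
        exists (- x). rewrite <- (Ropp_involutive x) in Ix. apply between_opp in Ix.
        split; [exact Ix | rewrite Ropp_involutive; lra]. }
    apply filterlim_reflect in Hrefl. rewrite Rbar_opp_involutive in Hrefl.
    eapply filterlim_ext; [|exact Hrefl]. intros x. simpl.
    rewrite !Ropp_involutive. f_equal. ring.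
  - exact (filterlim_shift_from_left lo hi G Ginv G_incr Ginv_between G_Ginv
             G_unbounded_above y).
Qed.

End IncreasingChart.

Lemma flow_chart_opp lo hi (G H : R -> R) :
  (forall x, H x = - G x) -> flow_chart lo hi G -> flow_chart lo hi H.
Proof.
  intros EH [[_ [Ginj Gsurj]]
    [Ginv [Ginv_G [G_Ginv [[Ginv_maps [Ginv_inj Ginv_surj]] Hshift]]]]].
  split.
  { split; [now intros | split].
    - intros x1 x2 I1 I2 E. apply Ginj; auto. rewrite !EH in E. lra.
    - intros r _. destruct (Gsurj (- r) I) as [x [Ix Ex]].
      exists x. rewrite EH. split; [exact Ix | lra]. }
  exists (fun r => Ginv (- r)). split; [|split; [|split]].
  - intros x Ix. rewrite EH, Ropp_involutive. auto.
  - intros r. rewrite EH, G_Ginv. ring.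
  - split; [intros r _; apply Ginv_maps; exact I | split].
    + intros r1 r2 _ _ E. apply Ginv_inj in E; [lra | exact I | exact I].
    + intros x Ix. destruct (Ginv_surj x Ix) as [r [_ Er]].
      exists (- r). rewrite Ropp_involutive. auto.
  - intros y. destruct (Hshift (- y)) as [Hbij [Hlo Hhi]].
    assert (E : forall x, Ginv (G x + - y) = Ginv (- (H x + y))).
    { intros x. rewrite EH. f_equal. ring. }
    split; [|split].
    + exact (bij_on_ext _ _ _ _ E Hbij).
    + exact (filterlim_ext _ _ E Hlo).
    + exact (filterlim_ext _ _ E Hhi).
Qed.

Lemma lipschitz_with_pos (sigma : R -> R) :
  lipschitz sigma ->
  exists L, 0 < L /\ lipschitz_with L sigma.
Proof.
  intros [L0 HL0]. exists (Rabs L0 + 1). split; [pose proof (Rabs_pos L0); lra|].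
  intros x y. pose proof (HL0 x y). pose proof (Rle_abs L0).
  pose proof (Rabs_pos (x - y)). nra.
Qed.

Lemma lipschitz_continuity (sigma : R -> R) (L : R) :
  0 < L -> lipschitz_with L sigma ->
  continuity sigma.
Proof.
  intros HL Hlip x eps Heps. exists (eps / L).
  split; [apply Rdiv_lt_0_compat; lra|]. intros y [_ Hy]. simpl in *.
  unfold R_dist in *. apply (Rle_lt_trans _ (L * Rabs (y - x))); [apply Hlip|].
  apply (Rmult_lt_compat_l L) in Hy; [|exact HL].
  replace (L * (eps / L)) with eps in Hy by (field; lra). exact Hy.
Qed.

Lemma sign_constant_on (sigma : R -> R) lo hi a :
  continuity sigma -> (forall x, between lo hi x -> sigma x <> 0) -> between lo hi a ->
  (forall x, between lo hi x -> 0 < sigma x) \/ (forall x, between lo hi x -> sigma x < 0).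
Proof.
  intros Hc Hnz Ia.
  assert (Hsame : forall x, between lo hi x -> 0 < sigma a * sigma x).
  { intros x Ix. destruct (Rlt_or_le 0 (sigma a * sigma x)) as [Hpos|Hle]; [exact Hpos|].
    exfalso. destruct (IVT_gen sigma a x 0 Hc) as [c [Hc' Hc0]].
    { unfold Rmin, Rmax. destruct (Rle_dec _ _); split; nra. }
    apply (Hnz c); [|exact Hc0].
    apply (between_convex _ _ (Rmin a x) (Rmax a x)); [apply Rmin_case | apply Rmax_case | ];
      auto. }
  destruct (Rlt_or_le 0 (sigma a)); [left | right]; intros x Ix;
    pose proof (Hsame x Ix); nra.
Qed.

Lemma derive_le_diff (f g df dg : R -> R) (a x : R) :
  a <= x ->
  (forall c, a <= c <= x -> is_derive f c (df c)) ->
  (forall c, a <= c <= x -> is_derive g c (dg c)) ->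
  (forall c, a <= c <= x -> df c <= dg c) ->
  f x - f a <= g x - g a.
Proof.
  intros Hax Hf Hg Hle.
  assert (Hd : forall c, a <= c <= x -> is_derive (fun t => g t - f t) c (dg c - df c)).
  { intros c Hc. exact (is_derive_minus g f c _ _ (Hg c Hc) (Hf c Hc)). }
  pose proof (MVT_gen (fun t => g t - f t) a x (fun t => dg t - df t)) as Hmvt.
  cbv zeta in Hmvt. rewrite Rmin_left, Rmax_right in Hmvt by lra.
  destruct Hmvt as [c [Hc E]].
  - intros c Hc. apply Hd. lra.
  - intros c Hc. apply continuity_pt_filterlim.
    apply (ex_derive_continuous (fun t => g t - f t)). eexists. apply Hd, Hc.
  - pose proof (Hle c Hc). nra.
Qed.

Lemma unbounded_of_minorant lo hi (G psi : R -> R) (a : R) :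
  between lo hi a -> filterlim psi (from_left hi) (Rbar_locally p_infty) ->
  (forall x, between lo hi x -> a <= x -> psi x - psi a <= G x - G a) ->
  forall r, exists x, between lo hi x /\ r < G x.
Proof.
  intros Ia Hpsi Hcmp r.
  assert (Hbig : from_left hi (fun x => r - G a + psi a < psi x)).
  { apply Hpsi. exists (r - G a + psi a). auto. }
  destruct (filter_ex _ (filter_and _ _ Hbig (from_left_beyond lo hi a Ia)))
    as [x [Hx [Hax Ix]]].
  exists x. split; [exact Ix|]. pose proof (Hcmp x Ix (Rlt_le _ _ Hax)). lra.
Qed.

Definition vanishes_at (sigma : R -> R) (b : Rbar) : Prop :=
  match b with Finite r => sigma r = 0 | _ => True end.

Lemma vanishes_at_opp (sigma : R -> R) (b : Rbar) :
  vanishes_at sigma b -> vanishes_at (fun x => - sigma x) b.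
Proof. destruct b; simpl; auto. intros ->. ring. Qed.

Section PositiveField.

Variables (sigma G : R -> R) (lo hi : Rbar) (L : R).
Hypothesis L_pos : 0 < L.
Hypothesis sigma_lip : lipschitz_with L sigma.
Hypothesis sigma_pos : forall x, between lo hi x -> 0 < sigma x.
Hypothesis G_derive : forall x, between lo hi x -> is_derive G x (/ sigma x).

Lemma increasing_on_of_derive : increasing_on lo hi G.
Proof.
  intros x1 x2 [A1 _] [_ B2] Hlt.
  apply (incr_function G lo hi (fun x => / sigma x)); auto.
  - intros x Hlo Hhi. apply G_derive. split; auto.
  - intros x Hlo Hhi. apply Rinv_0_lt_compat, sigma_pos. split; auto.
Qed.

Lemma increment_le_G a (psi dpsi : R -> R) :
  (forall c, between lo hi c -> a <= c -> is_derive psi c (dpsi c) /\ dpsi c <= / sigma c) ->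
  between lo hi a ->
  forall x, between lo hi x -> a <= x -> psi x - psi a <= G x - G a.
Proof.
  intros Hpsi Ia x Ix Hax.
  assert (Iax : forall c, a <= c <= x -> between lo hi c /\ a <= c).
  { intros c Hc. split; [apply (between_convex _ _ a x) |]; auto; lra. }
  apply (derive_le_diff psi G dpsi (fun c => / sigma c)); [exact Hax | | |];
    intros c Hc; destruct (Iax c Hc) as [Ic Hac]; [apply Hpsi | apply G_derive | apply Hpsi];
    auto.
Qed.

Lemma unbounded_above_of_vanishes a :
  between lo hi a -> vanishes_at sigma hi ->
  forall r, exists x, between lo hi x /\ r < G x.
Proof.
  intros Ia Hhi. pose proof (sigma_pos a Ia) as Ha.
  pose proof (fun psi dpsi Hpsi => increment_le_G a psi dpsi Hpsi Ia) as Hcmp.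
  destruct hi as [b| |]; simpl in Hhi; [| | destruct (proj2 Ia)].
  - apply (unbounded_of_minorant lo b G (fun x => - ln (b - x) / L) a Ia).
    + apply filterlim_div_p_infty; [exact L_pos|].
      eapply filterlim_comp; [|apply (filterlim_Rbar_opp m_infty)].
      eapply filterlim_comp; [|exact is_lim_ln_0].
      intros P [e He]. exists e. intros x Hx Hxb. apply He; [|lra].
      change (Rabs (b - x - 0) < e). change (Rabs (x - b) < e) in Hx.
      rewrite Rminus_0_r, Rabs_minus_sym. exact Hx.
    + apply (Hcmp (fun x => - ln (b - x) / L) (fun c => / (L * (b - c)))). intros c Ic Hac.
      pose proof (proj2 Ic) as Hcb. simpl in Hcb.
      split; [auto_derive; [lra | field; lra]|].
      apply Rinv_le_contravar; [apply sigma_pos, Ic|].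
      pose proof (sigma_lip c b) as Hl. pose proof (sigma_pos c Ic).
      rewrite Hhi, Rminus_0_r, Rabs_right, Rabs_left in Hl by lra. lra.
  - set (c0 := a - sigma a / L).
    assert (Hc0 : c0 < a) by (unfold c0; pose proof (Rdiv_lt_0_compat _ _ Ha L_pos); lra).
    apply (unbounded_of_minorant lo p_infty G (fun x => ln (x - c0) / L) a Ia).
    + apply filterlim_div_p_infty; [exact L_pos|].
      eapply filterlim_comp; [|exact is_lim_ln_p].
      intros P [M HM]. exists (M + c0). intros x Hx. apply HM. lra.
    + apply (Hcmp (fun x => ln (x - c0) / L) (fun c => / (L * (c - c0)))). intros c Ic Hac.
      split; [auto_derive; [lra | field; lra]|].
      apply Rinv_le_contravar; [apply sigma_pos, Ic|].
      pose proof (sigma_lip c a) as Hl.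
      rewrite (Rabs_right (c - a)) in Hl by lra.
      pose proof (Rle_abs (sigma c - sigma a)).
      replace (L * (c - c0)) with (sigma a + L * (c - a)) by (unfold c0; field; lra). lra.
Qed.

End PositiveField.

Lemma unbounded_below_of_vanishes (sigma G : R -> R) (lo hi : Rbar) (L a : R) :
  0 < L -> lipschitz_with L sigma ->
  (forall x, between lo hi x -> 0 < sigma x) ->
  (forall x, between lo hi x -> is_derive G x (/ sigma x)) ->
  between lo hi a -> vanishes_at sigma lo ->
  forall r, exists x, between lo hi x /\ G x < r.
Proof.
  intros HL Hlip Hpos Hder Ia Hlo r.
  assert (Hrefl : forall x, between (Rbar_opp hi) (Rbar_opp lo) x -> between lo hi (- x)).
  { intros x Ix. apply between_opp. exact Ix. }
  destruct (unbounded_above_of_vanishes (fun x => sigma (- x)) (fun x => - G (- x))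
              (Rbar_opp hi) (Rbar_opp lo) L HL) with (a := - a) (r := - r)
    as [x [Ix Hx]].
  - intros x y. replace (x - y) with (- (- x - - y)) by ring.
    rewrite Rabs_Ropp. apply Hlip.
  - intros x Ix. apply Hpos, Hrefl, Ix.
  - intros x Ix. replace (/ sigma (- x)) with (- (-1 * / sigma (- x))) by ring.
    apply (is_derive_opp (fun x => G (- x))).
    apply (is_derive_comp G Ropp x (/ sigma (- x)) (-1)); [apply Hder, Hrefl, Ix|].
    change (is_derive (fun t => - t) x (-1)). auto_derive; [exact I | ring].
  - rewrite <- between_opp, Ropp_involutive. exact Ia.
  - destruct lo; simpl in *; [rewrite Ropp_involutive|..]; auto.
  - exists (- x). split; [apply Hrefl, Ix | lra].
Qed.

Lemma flow_chart_of_pos (sigma G : R -> R) (lo hi : Rbar) (L a : R) :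
  0 < L -> lipschitz_with L sigma ->
  (forall x, between lo hi x -> 0 < sigma x) ->
  (forall x, between lo hi x -> is_derive G x (/ sigma x)) ->
  between lo hi a -> vanishes_at sigma lo -> vanishes_at sigma hi ->
  increasing_on lo hi G /\ flow_chart lo hi G.
Proof.
  intros HL Hlip Hpos Hder Ia Hlo Hhi.
  assert (Hinc := increasing_on_of_derive sigma G lo hi Hpos Hder).
  split; [exact Hinc|]. apply flow_chart_increasing; [| exact Hinc | |].
  - intros x Ix. apply continuity_pt_filterlim, (ex_derive_continuous G).
    eexists. apply Hder, Ix.
  - exact (unbounded_above_of_vanishes sigma G lo hi L HL Hlip Hpos Hder a Ia Hhi).
  - exact (unbounded_below_of_vanishes sigma G lo hi L a HL Hlip Hpos Hder Ia Hlo).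
Qed.

Lemma flow_chart_of_derive_inv (sigma H : R -> R) (lo hi : Rbar) (L a : R) :
  0 < L -> lipschitz_with L sigma ->
  (forall x, between lo hi x -> sigma x <> 0) ->
  (forall x, between lo hi x -> is_derive H x (/ sigma x)) ->
  between lo hi a -> vanishes_at sigma lo -> vanishes_at sigma hi ->
  ((forall x1 x2, between lo hi x1 -> between lo hi x2 -> x1 <= x2 -> H x1 <= H x2) \/
   (forall x1 x2, between lo hi x1 -> between lo hi x2 -> x1 <= x2 -> H x2 <= H x1)) /\
  flow_chart lo hi H.
Proof.
  intros HL Hlip Hnz Hder Ia Hlo Hhi.
  destruct (sign_constant_on sigma lo hi a (lipschitz_continuity sigma L HL Hlip) Hnz Ia)
    as [Hpos|Hneg].
  - destruct (flow_chart_of_pos sigma H lo hi L a) as [Hinc Hchart]; auto.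
    split; [left; apply increasing_on_le|]; auto.
  - destruct (flow_chart_of_pos (fun x => - sigma x) (fun x => - H x) lo hi L a)
      as [Hinc Hchart]; auto using vanishes_at_opp.
    + intros x y. replace (- sigma x - - sigma y) with (- (sigma x - sigma y)) by ring.
      rewrite Rabs_Ropp. apply Hlip.
    + intros x Ix. pose proof (Hneg x Ix). lra.
    + intros x Ix. replace (/ - sigma x) with (- / sigma x) by (field; apply Hnz, Ix).
      exact (is_derive_opp H x _ (Hder x Ix)).
    + split; [right|].
      * intros x1 x2 I1 I2 Hle. pose proof (increasing_on_le _ _ _ Hinc x1 x2 I1 I2 Hle).
        lra.
      * apply (flow_chart_opp lo hi (fun x => - H x)); [intros x; ring | exact Hchart].
Qed.

Lemma ex_RInt_between (f : R -> R) lo hi a x :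
  (forall w, between lo hi w -> continuous f w) ->
  between lo hi a -> between lo hi x -> ex_RInt f a x.
Proof.
  intros Hf Ia Ix. apply (@ex_RInt_continuous R_CompleteNormedModule).
  intros w Hw. apply Hf, (between_convex _ _ (Rmin a x) (Rmax a x));
    [apply Rmin_case | apply Rmax_case | ]; auto.
Qed.

Lemma is_derive_RInt_between (f : R -> R) lo hi a x :
  (forall w, between lo hi w -> continuous f w) ->
  between lo hi a -> between lo hi x -> is_derive (RInt f a) x (f x).
Proof.
  intros Hf Ia Ix. apply (is_derive_RInt f (RInt f a) a x); [|apply Hf, Ix].
  apply (filter_imp (between lo hi)); [|exact (open_between lo hi x Ix)].
  intros w Iw. apply (@RInt_correct R_CompleteNormedModule).
  exact (ex_RInt_between f lo hi a w Hf Ia Iw).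
Qed.

Lemma increasing_seq_le (z : nat -> R) (n : nat) :
  (forall k, (1 <= k)%nat -> (k < n)%nat -> z k < z (S k)) ->
  forall k j, (1 <= k)%nat -> (k <= j)%nat -> (j <= n)%nat -> z k <= z j.
Proof.
  intros Hz k j Hk Hkj. induction Hkj as [|j Hkj IH]; intros Hj; [lra|].
  pose proof (IH ltac:(lia)). pose proof (Hz j ltac:(lia) ltac:(lia)). lra.
Qed.

Lemma in_ival_neq_zero (n : nat) (z : nat -> R) (i k : nat) (x : R) :
  (forall k, (1 <= k)%nat -> (k < n)%nat -> z k < z (S k)) ->
  (i <= n)%nat -> in_ival n z i x -> (1 <= k)%nat -> (k <= n)%nat -> x <> z k.
Proof.
  intros Hz Hi [Hlo Hhi] Hk1 Hkn ->.
  destruct (Compare_dec.le_lt_dec k i) as [Hki|Hik].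
  - destruct i as [|i]; [lia|]. simpl in Hlo.
    pose proof (increasing_seq_le z n Hz k (S i) Hk1 Hki Hi). lra.
  - unfold xhi in Hhi. destruct (Nat.eqb_spec i n); [lia|]. simpl in Hhi.
    pose proof (increasing_seq_le z n Hz (S i) k ltac:(lia) Hik Hkn). lra.
Qed.

Lemma vanishes_at_xlo (sigma : R -> R) (n : nat) (z : nat -> R) (i : nat) :
  (forall k, (1 <= k)%nat -> (k <= n)%nat -> sigma (z k) = 0) ->
  (i <= n)%nat -> vanishes_at sigma (xlo z i).
Proof. intros Hz Hi. destruct i; simpl; [exact I | apply Hz; lia]. Qed.

Lemma vanishes_at_xhi (sigma : R -> R) (n : nat) (z : nat -> R) (i : nat) :
  (forall k, (1 <= k)%nat -> (k <= n)%nat -> sigma (z k) = 0) ->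
  (i <= n)%nat -> vanishes_at sigma (xhi n z i).
Proof.
  intros Hz Hi. unfold xhi. destruct (Nat.eqb_spec i n); simpl; [exact I | apply Hz; lia].
Qed.

Theorem lemma3 (sigma : R -> R) (n : nat) (z : nat -> R) (a : nat -> R)
  (Hlip : lipschitz sigma)
  (Hz_incr : forall k : nat, (1 <= k)%nat -> (k < n)%nat -> z k < z (S k))
  (Hz_zeros : forall x, sigma x = 0 <-> exists k : nat, (1 <= k)%nat /\ (k <= n)%nat /\ x = z k)
  (Ha : forall i : nat, (i <= n)%nat -> in_ival n z i (a i)) :
  forall i : nat, (i <= n)%nat ->
    (forall x, in_ival n z i x -> ex_RInt (fun y => / sigma y) (a i) x) /\
    ((forall x1 x2, in_ival n z i x1 -> in_ival n z i x2 -> x1 <= x2 ->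
        Hfun sigma a i x1 <= Hfun sigma a i x2) \/
     (forall x1 x2, in_ival n z i x1 -> in_ival n z i x2 -> x1 <= x2 ->
        Hfun sigma a i x2 <= Hfun sigma a i x1)) /\
    bij_on (in_ival n z i) (fun _ => True) (Hfun sigma a i) /\
    exists Hinv : R -> R,
      (forall x, in_ival n z i x -> Hinv (Hfun sigma a i x) = x) /\
      (forall r, Hfun sigma a i (Hinv r) = r) /\
      bij_on (fun _ => True) (in_ival n z i) Hinv /\
      forall y : R,
        bij_on (in_ival n z i) (in_ival n z i)
               (fun x => Hinv (Hfun sigma a i x + y)) /\
        filterlim (fun x => Hinv (Hfun sigma a i x + y))
                  (from_right (xlo z i)) (Rbar_locally (xlo z i)) /\
        filterlim (fun x => Hinv (Hfun sigma a i x + y))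
                  (from_left (xhi n z i)) (Rbar_locally (xhi n z i)).
Proof.
  intros i Hi.
  destruct (lipschitz_with_pos sigma Hlip) as [L [HL HlipL]].
  assert (Hzero : forall k, (1 <= k)%nat -> (k <= n)%nat -> sigma (z k) = 0).
  { intros k Hk1 Hkn. apply Hz_zeros. exists k. auto. }
  assert (Hnz : forall x, in_ival n z i x -> sigma x <> 0).
  { intros x Ix Hx. apply Hz_zeros in Hx as [k [Hk1 [Hkn Hxk]]].
    exact (in_ival_neq_zero n z i k x Hz_incr Hi Ix Hk1 Hkn Hxk). }
  assert (Hcont : forall x, in_ival n z i x -> continuous (fun y => / sigma y) x).
  { intros x Ix. apply continuity_pt_filterlim, continuity_pt_inv; [|apply Hnz, Ix].
    exact (lipschitz_continuity sigma L HL HlipL x). }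
  split; [intros x Ix; exact (ex_RInt_between _ _ _ _ _ Hcont (Ha i Hi) Ix)|].
  refine (flow_chart_of_derive_inv sigma (Hfun sigma a i) (xlo z i) (xhi n z i) L (a i)
    HL HlipL Hnz _ (Ha i Hi) (vanishes_at_xlo sigma n z i Hzero Hi)
    (vanishes_at_xhi sigma n z i Hzero Hi)).
  intros x Ix. exact (is_derive_RInt_between _ _ _ _ _ Hcont (Ha i Hi) Ix).
Qed.
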